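(* For each $n\in\mathbb{N}$: if $(\Sigma^{\mathrm{CoR}}_1)_{\le 1}/{\sim_{\mathrm{REL}}}$ is finite, then $(\Sigma^{\mathrm{CoR}}_{n})_{\le 1}/{\sim_{\mathrm{REL}}}$ is finite.
   Context: Fix a non-empty finite set $V$ of variables. CoR terms are generated by $t ::= a \mid \bot \mid \top \mid t \cup t \mid t \cap t \mid t^{-} \mid \mathrm{I} \mid \mathrm{D} \mid t \cdot t \mid t \dagger t \mid t^{\pi}$, where $a \in V$ and $\pi$ ranges over all maps $\{1,2\}\to\{1,2\}$. A structure $M$ consists of a non-empty set $|M|$ and a binary relation $a^M\subseteq|M|^2$ for each $a\in V$. The interpretation $[\![t]\!]_M\subseteq|M|^2$: $[\![a]\!]_M=a^M$, $[\![\bot]\!]_M=\emptyset$, $[\![\top]\!]_M=|M|^2$, $\cup,\cap$ set-theoretic, $[\![t^-]\!]_M=|M|^2\setminus[\![t]\!]_M$, $[\![\mathrm{I}]\!]_M=\{(x,y):x=y\}$, $[\![\mathrm{D}]\!]_M=\{(x,y):x\ne y\}$, $R\cdot S=\{(x,y):\exists z,(x,z)\in R\wedge(z,y)\in S\}$, $R\dagger S=\{(x,y):\forall z,(x,z)\in R\vee(z,y)\in S\}$, $R^{\pi}=\{(x_1,x_2):(x_{\pi(1)},x_{\pi(2)})\in R\}$. $t\sim_{\mathrm{REL}}s$ iff $[\![t]\!]_M=[\![s]\!]_M$ for all structures $M$. $\mathrm{vo}(t)$ is the number of occurrences of variables in $t$, $S_{\le k}=\{t\in S:\mathrm{vo}(t)\le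 k\}$. The dot-dagger alternation hierarchy: $\Sigma^{\mathrm{CoR}}_n,\Pi^{\mathrm{CoR}}_n$ are the least sets such that $\Sigma^{\mathrm{CoR}}_0=\Pi^{\mathrm{CoR}}_0$ is the set of terms containing neither $\cdot$ nor $\dagger$; $\Sigma^{\mathrm{CoR}}_n\cup\Pi^{\mathrm{CoR}}_n\subseteq\Sigma^{\mathrm{CoR}}_{n+1}\cap\Pi^{\mathrm{CoR}}_{n+1}$; for $n\ge1$, if $s,u\in\Sigma^{\mathrm{CoR}}_n$ then $s\cup u,s\cap u,s\cdot u,s^{\pi}\in\Sigma^{\mathrm{CoR}}_n$ and $s\dagger u\in\Pi^{\mathrm{CoR}}_{n+1}$; for $n\ge1$, if $s,u\in\Pi^{\mathrm{CoR}}_n$ then $s\cup u,s\cap u,s\dagger u,s^{\pi}\in\Pi^{\mathrm{CoR}}_n$ and $s\cdot u\in\Sigma^{\mathrm{CoR}}_{n+1}$. *)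

From mathcomp Require Import all_boot.
Set Implicit Arguments. Unset Strict Implicit. Unset Printing Implicit Defensive.

(* Maps pi : {1,2} -> {1,2} are encoded as bool -> bool,
   with false standing for 1 and true for 2. *)
Inductive term (V : Type) : Type :=
| tvar  : V -> term V
| tbot  : term V
| ttop  : term V
| tcup  : term V -> term V -> term V
| tcap  : term V -> term V -> term V
| tcomp : term V -> term V
| tid   : term V
| tdiff : term V
| tdot  : term V -> term V -> term V
| tdag  : term V -> term V -> term V
| tperm : (bool -> bool) -> term V -> term V.

Arguments tbot {V}. Arguments ttop {V}. Arguments tid {V}. Arguments tdiff {V}.

Fixpoint sem (V M : Type) (I : V -> M -> M -> Prop) (t : term V) : M -> M -> Prop :=
  match t with
  | tvar a => I a
  | tbot => fun _ _ => False
  | ttop => fun _ _ => True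
  | tcup s u => fun x y => sem I s x y \/ sem I u x y
  | tcap s u => fun x y => sem I s x y /\ sem I u x y
  | tcomp s => fun x y => ~ sem I s x y
  | tid => fun x y => x = y
  | tdiff => fun x y => x <> y
  | tdot s u => fun x y => exists z, sem I s x z /\ sem I u z y
  | tdag s u => fun x y => forall z, sem I s x z \/ sem I u z y
  | tperm pi s => fun x y =>
      let xs := fun b : bool => if b then y else x in
      sem I s (xs (pi false)) (xs (pi true))
  end.

(* t ~REL s : equal interpretation in every structure (non-empty universe). *)
Definition rel_equiv (V : Type) (t s : term V) : Prop :=
  forall (M : Type) (m0 : M) (I : V -> M -> M -> Prop) (x y : M),
    sem I t x y <-> sem I s x y.

Fixpoint vo (V : Type) (t : term V) : nat :=
  match t with
  | tvar _ => 1
  | tbot | ttop | tid | tdiff => 0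
  | tcup s u | tcap s u | tdot s u | tdag s u => vo s + vo u
  | tcomp s | tperm _ s => vo s
  end.

Fixpoint dd_free (V : Type) (t : term V) : bool :=
  match t with
  | tvar _ | tbot | ttop | tid | tdiff => true
  | tcup s u | tcap s u => dd_free s && dd_free u
  | tcomp s | tperm _ s => dd_free s
  | tdot _ _ | tdag _ _ => false
  end.

Inductive Sigma (V : Type) : nat -> term V -> Prop :=
| Sig0 : forall t, dd_free t -> Sigma 0 t
| SigS_Sig : forall n t, Sigma n t -> Sigma n.+1 t
| SigS_Pi : forall n t, Pi n t -> Sigma n.+1 t
| Sig_cup : forall n s u, 1 <= n -> Sigma n s -> Sigma n u -> Sigma n (tcup s u)
| Sig_cap : forall n s u, 1 <= n -> Sigma n s -> Sigma n u -> Sigma n (tcap s u)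
| Sig_dot : forall n s u, 1 <= n -> Sigma n s -> Sigma n u -> Sigma n (tdot s u)
| Sig_perm : forall n pi s, 1 <= n -> Sigma n s -> Sigma n (tperm pi s)
| Sig_dotPi : forall n s u, 1 <= n -> Pi n s -> Pi n u -> Sigma n.+1 (tdot s u)
with Pi (V : Type) : nat -> term V -> Prop :=
| Pi0 : forall t, dd_free t -> Pi 0 t
| PiS_Sig : forall n t, Sigma n t -> Pi n.+1 t
| PiS_Pi : forall n t, Pi n t -> Pi n.+1 t
| Pi_cup : forall n s u, 1 <= n -> Pi n s -> Pi n u -> Pi n (tcup s u)
| Pi_cap : forall n s u, 1 <= n -> Pi n s -> Pi n u -> Pi n (tcap s u)
| Pi_dag : forall n s u, 1 <= n -> Pi n s -> Pi n u -> Pi n (tdag s u)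
| Pi_perm : forall n pi s, 1 <= n -> Pi n s -> Pi n (tperm pi s)
| Pi_dagSig : forall n s u, 1 <= n -> Sigma n s -> Sigma n u -> Pi n.+1 (tdag s u).

Definition finite_quotient (V : Type) (S : term V -> Prop) : Prop :=
  exists (k : nat) (f : nat -> term V),
    forall t, S t -> exists i, i < k /\ rel_equiv t (f i).

From mathcomp Require Import all_boot.
From Stdlib Require Import Classical FunctionalExtensionality PropExtensionality.
From Stdlib Require List.
Set Implicit Arguments. Unset Strict Implicit. Unset Printing Implicit Defensive.

(* On structures of one size class (one element, two elements, at least three
   elements) a variable-free term denotes the relation that is a fixed truth
   value e on I and a fixed truth value d on D, so it can be replaced by one of
   bot, top, I, D.  On such a class, a Sigma_{n+1} term with at most one
   variable occurrence is therefore a Sigma_1 term with at most one variable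
   occurrence, into which a Sigma_n or Pi_n term with at most one variable
   occurrence is substituted.  Pi_n terms are complements of Sigma_n terms, so
   by induction finitely many Sigma_1 classes give finitely many Sigma_n
   classes on each size class; the three finite quotients then combine into
   one valid on all structures. *)

Lemma rel_ext (M : Type) (R S : M -> M -> Prop) :
  (forall x y, R x y <-> S x y) -> R = S.
Proof.
move=> RS; apply: functional_extensionality => x.
apply: functional_extensionality => y; exact: propositional_extensionality.
Qed.

Section Syntax.
Variable V : Type.
Implicit Types (s t u C : term V).

Fixpoint subst s t : term V :=
  match t with
  | tvar _ => s
  | tbot => tbot | ttop => ttop | tid => tid | tdiff => tdiff
  | tcup a b => tcup (subst s a) (subst s b)
  | tcap a b => tcap (subst s a) (subst s b)
  | tcomp a => tcomp (subst s a)
  | tdot a b => tdot (subst s a) (subst s b)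
  | tdag a b => tdag (subst s a) (subst s b)
  | tperm pi a => tperm pi (subst s a)
  end.

Lemma sem_subst M (I : V -> M -> M -> Prop) s t :
  sem I (subst s t) = sem (fun _ => sem I s) t.
Proof. by elim: t => //= [a -> b ->|a -> b ->|a ->|a -> b ->|a -> b ->|pi a ->]. Qed.

Lemma subst_closed s t : vo t = 0 -> subst s t = t.
Proof.
elim: t => //= [a IHa b IHb|a IHa b IHb|a IHa|a IHa b IHb|a IHa b IHb|pi a IHa];
  by [move=> /eqP; rewrite addn_eq0 => /andP[/eqP/IHa-> /eqP/IHb->] | move=> /IHa->].
Qed.

Fixpoint dual t : term V :=
  match t with
  | tvar a => tcomp (tvar a) | tbot => ttop | ttop => tbot
  | tcup a b => tcap (dual a) (dual b) | tcap a b => tcup (dual a) (dual b)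
  | tcomp a => a | tid => tdiff | tdiff => tid
  | tdot a b => tdag (dual a) (dual b) | tdag a b => tdot (dual a) (dual b)
  | tperm pi a => tperm pi (dual a)
  end.

Lemma sem_dual M (I : V -> M -> M -> Prop) t x y :
  sem I (dual t) x y <-> ~ sem I t x y.
Proof.
elim: t x y => /= [v|||a IHa b IHb|a IHa b IHb|a IHa|||a IHa b IHb|a IHa b IHb|pi a IHa]
  x y; rewrite ?IHa ?IHb; try tauto.
- setoid_rewrite IHa; setoid_rewrite IHb.
  split=> [h [z [az bz]] | h z]; first by case: (h z).
  by apply: not_and_or => hz; apply: h; exists z.
- setoid_rewrite IHa; setoid_rewrite IHb.
  by split=> [[z [az bz]] /(_ z) [] | /not_all_ex_not [z /not_or_and]]; last exists z.
Qed.

Lemma vo_dual t : vo (dual t) = vo t.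
Proof. by elim: t => //= *; congruence. Qed.

Lemma dd_free_dual t : dd_free t -> dd_free (dual t).
Proof. by elim: t => //= [a IHa b IHb|a IHa b IHb] /andP[/IHa-> /IHb->]. Qed.

Scheme Sigma_mut := Induction for Sigma Sort Prop
  with Pi_mut := Induction for Pi Sort Prop.
Combined Scheme Sigma_Pi_mut from Sigma_mut, Pi_mut.

Lemma Sigma_Pi_dual :
  (forall n t, Sigma n t -> Pi n (dual t)) /\ (forall n t, Pi n t -> Sigma n (dual t)).
Proof.
apply: Sigma_Pi_mut => /= *;
  by [ constructor; exact: dd_free_dual | constructor | exact: PiS_Pi | exact: SigS_Sig
     | exact: Pi_cap | exact: Pi_cup | exact: Sig_cap | exact: Sig_cup].
Qed.

Lemma Sigma1_dd_free t : dd_free t -> Sigma 1 t.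
Proof. by move=> h; apply/SigS_Sig/Sig0. Qed.

End Syntax.

Section FiniteQuotients.
Variable V : Type.
Implicit Types (s t u C : term V) (P Q : Type -> Prop) (S : term V -> Prop).

Definition rel_equiv_on P t u :=
  forall M (m0 : M) (I : V -> M -> M -> Prop), P M -> sem I t = sem I u.

Definition finite_quotient_on P S :=
  exists l : seq (term V), forall t, S t -> exists2 u, List.In u l & rel_equiv_on P t u.

Lemma finite_quotientE S : finite_quotient S <-> finite_quotient_on (fun _ => True) S.
Proof.
split=> [[k [f fP]] | [l lP]].
  exists (List.map f (List.seq 0 k)) => t /fP [i [lt_ik ti]].
    exists (f i); first by apply/List.in_map/List.in_seq; split; [exact/leP | exact/ltP].
  by move=> M m0 I _; apply: rel_ext; exact: ti.
exists (length l), (fun i => List.nth i l tbot) => t /lP [u /(List.In_nth _ _ tbot)].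
move=> [i [lt_il <-]] tu; exists i; split; first exact/ltP.
by move=> M m0 I x y; rewrite (tu M m0 I).
Qed.

Lemma finite_quotient_on_mono P Q S S' :
  (forall M, Q M -> P M) -> (forall t, S' t -> S t) ->
  finite_quotient_on P S -> finite_quotient_on Q S'.
Proof.
move=> QP S'S [l lP]; exists l => t /S'S /lP [u lu tu].
by exists u => // M m0 I /QP; exact: tu.
Qed.

Lemma finite_quotient_onU P S1 S2 :
  finite_quotient_on P S1 -> finite_quotient_on P S2 ->
  finite_quotient_on P (fun t => S1 t \/ S2 t).
Proof.
move=> [l1 l1P] [l2 l2P]; exists (List.app l1 l2) => t [/l1P|/l2P] [u lu tu];
  exists u => //; apply: List.in_or_app; by [left|right].
Qed.

Lemma finite_choice (A B : Type) (R : A -> B -> Prop) (L : seq A) :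
  exists l : seq B, forall a, List.In a L -> (exists b, R a b) ->
    exists2 b, List.In b l & R a b.
Proof.
elim: L => [|a L [l lP]]; first by exists nil.
have [[b ab]|no_b] := classic (exists b, R a b).
  exists (b :: l) => a' [<- _|La' /(lP _ La') [b' lb' ab']]; first by exists b; [left|].
  by exists b' => //; right.
by exists l => a' [<- /no_b|La'] //; exact: lP.
Qed.

(* A representative is chosen for each pair of representatives on the two
   classes. *)
Lemma finite_quotient_on_classU P Q S :
  finite_quotient_on P S -> finite_quotient_on Q S ->
  finite_quotient_on (fun M => P M \/ Q M) S.
Proof.
move=> [l1 l1P] [l2 l2P].
pose R (p : term V * term V) t := [/\ S t, rel_equiv_on P t p.1 & rel_equiv_on Q t p.2].
have [l lP] := finite_choice R (List.list_prod l1 l2).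
exists l => t St; have [u1 lu1 tu1] := l1P t St; have [u2 lu2 tu2] := l2P t St.
have [t' lt' [_ t'u1 t'u2]] : exists2 t', List.In t' l & R (u1, u2) t'.
  by apply: lP; [exact: List.in_prod | exists t].
exists t' => // M m0 I [PM|QM].
  by rewrite (tu1 M m0 I PM) (t'u1 M m0 I PM).
by rewrite (tu2 M m0 I QM) (t'u2 M m0 I QM).
Qed.

Lemma finite_quotient_on_subst P SC SA S :
  finite_quotient_on P SC -> finite_quotient_on P SA ->
  (forall t, S t -> exists C s, [/\ SC C, SA s & rel_equiv_on P t (subst s C)]) ->
  finite_quotient_on P S.
Proof.
move=> [lC lCP] [lA lAP] Sdec.
exists (List.flat_map (fun uC => List.map (fun us => subst us uC) lA) lC) => t.
move=> /Sdec [C [s [/lCP [uC luC CuC] /lAP [us lus sus] tCs]]].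
exists (subst us uC).
  by apply/List.in_flat_map; exists uC; split; last exact: List.in_map.
move=> M m0 I PM; rewrite (tCs M m0 I PM) !sem_subst (sus M m0 I PM).
exact: CuC.
Qed.

Lemma finite_quotient_on_Pi P n :
  finite_quotient_on P (fun t => Sigma n t /\ vo t <= 1) ->
  finite_quotient_on P (fun t => Pi n t /\ vo t <= 1).
Proof.
move=> [l lP]; exists (List.map (@tcomp V) l) => t [Pit vot].
have [|u lu tu] := lP (dual t).
  by rewrite vo_dual; split=> //; exact: (proj2 (Sigma_Pi_dual V)).
exists (tcomp u); first exact: List.in_map.
move=> M m0 I PM; apply: rel_ext => x y /=.
by rewrite -(tu M m0 I PM) sem_dual; split=> [? []|/NNPP].
Qed.

End FiniteQuotients.

Definition rel_ID (M : Type) (e d : Prop) (x y : M) : Prop :=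
  (x = y /\ e) \/ (x <> y /\ d).

Lemma rel_IDP (M : Type) (R : M -> M -> Prop) (e d : Prop) :
  (forall x, R x x <-> e) -> (forall x y, x <> y -> R x y <-> d) -> R = rel_ID e d.
Proof.
move=> Rdiag Roff; apply: rel_ext => x y; rewrite /rel_ID.
by case: (classic (x = y)) => [<-|nxy]; [rewrite Rdiag | rewrite Roff]; tauto.
Qed.

Lemma rel_ID_diag (M : Type) (e d : Prop) (x : M) : rel_ID e d x x <-> e.
Proof. by rewrite /rel_ID; split=> [[[]|[]]|] //; left. Qed.

Lemma rel_ID_off (M : Type) (e d : Prop) (x y : M) : x <> y -> rel_ID e d x y <-> d.
Proof. by rewrite /rel_ID => nxy; split=> [[[]|[]]|] //; right. Qed.

Lemma rel_ID_not (M : Type) (e d : Prop) (x y : M) :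
  ~ rel_ID e d x y <-> rel_ID (~ e) (~ d) x y.
Proof. by rewrite /rel_ID; case: (classic (x = y)); tauto. Qed.

(* [B2] and [B3] say whether a structure of [P] has at least two, resp. at
   least three, elements. *)
Definition size_profile (P : Type -> Prop) (B2 B3 : Prop) :=
  forall M, P M ->
    (forall x : M, (exists z, z <> x) <-> B2) /\
    (forall x y : M, x <> y -> (exists z, z <> x /\ z <> y) <-> B3).

Section ClosedTerms.
Variables (V : Type) (P : Type -> Prop) (B2 B3 : Prop).
Hypothesis PB : size_profile P B2 B3.

Definition dot_diag (e1 d1 e2 d2 : Prop) := e1 /\ e2 \/ d1 /\ d2 /\ B2.
Definition dot_off (e1 d1 e2 d2 : Prop) := e1 /\ d2 \/ d1 /\ e2 \/ d1 /\ d2 /\ B3.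

Lemma dot_rel_ID (M : Type) (e1 d1 e2 d2 : Prop) : P M ->
  (fun x y : M => exists z, rel_ID e1 d1 x z /\ rel_ID e2 d2 z y) =
  rel_ID (dot_diag e1 d1 e2 d2) (dot_off e1 d1 e2 d2).
Proof.
move=> /PB [hB2 hB3]; apply: rel_ext => x y; rewrite /rel_ID /dot_diag /dot_off; split.
- case=> z [[[<- e1z]|[nxz d1z]] [[<- e2z]|[nzy d2z]]]; try tauto.
  case: (classic (x = y)) => [exy|nxy]; [left|right]; split=> //.
    by right; split=> //; split=> //; apply/(hB2 y); exists z; congruence.
  by right; right; split=> //; split=> //; apply/(hB3 _ _ nxy); exists z; split; congruence.
- case=> [[<- [[e1x e2x]|[d1x [d2x /(hB2 x) [z nzx]]]]]|
          [nxy [[e1x d2x]|[[d1x e2x]|[d1x [d2x /(hB3 _ _ nxy) [z [nzx nzy]]]]]]]].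
  + by exists x; tauto.
  + by exists z; split; right; split=> //; congruence.
  + by exists x; tauto.
  + by exists y; tauto.
  + by exists z; split; right; split=> //; congruence.
Qed.

Lemma closed_sem (t : term V) : vo t = 0 ->
  exists e d : Prop, forall M (I : V -> M -> M -> Prop), P M -> sem I t = rel_ID e d.
Proof.
elim: t => //= [||a IHa b IHb|a IHa b IHb|a IHa|||a IHa b IHb|a IHa b IHb|pi a IHa];
  try (move=> /eqP; rewrite addn_eq0 => /andP[/eqP/IHa [e1 [d1 Ha]] /eqP/IHb [e2 [d2 Hb]]]);
  try move=> /IHa [e [d Ha]]; try move=> _.
- by exists False, False => M I _; apply: rel_IDP.
- by exists True, True => M I _; apply: rel_IDP.
- exists (e1 \/ e2), (d1 \/ d2) => M I PM; rewrite Ha // Hb //.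
  by apply: rel_IDP => [x|x y nxy]; rewrite ?rel_ID_diag ?(rel_ID_off _ _ nxy).
- exists (e1 /\ e2), (d1 /\ d2) => M I PM; rewrite Ha // Hb //.
  by apply: rel_IDP => [x|x y nxy]; rewrite ?rel_ID_diag ?(rel_ID_off _ _ nxy).
- exists (~ e), (~ d) => M I PM; rewrite Ha //.
  by apply: rel_ext => x y; exact: rel_ID_not.
- by exists True, False => M I _; apply: rel_IDP.
- by exists False, True => M I _; apply: rel_IDP.
- exists (dot_diag e1 d1 e2 d2), (dot_off e1 d1 e2 d2) => M I PM.
  by rewrite Ha // Hb //; exact: dot_rel_ID.
- exists (~ dot_diag (~ e1) (~ d1) (~ e2) (~ d2)), (~ dot_off (~ e1) (~ d1) (~ e2) (~ d2)).
  move=> M I PM; rewrite Ha // Hb //; apply: rel_ext => x y.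
  rewrite -rel_ID_not -(dot_rel_ID _ _ _ _ PM); split.
    by move=> h [z [/rel_ID_not az /rel_ID_not bz]]; case: (h z).
  move=> h z; apply: NNPP => nh; apply: h; exists z.
  by split; apply/rel_ID_not => ?; apply: nh; [left|right].
- exists e, (if pi false == pi true then e else d).
  move=> M I PM; rewrite /= Ha //; apply: rel_IDP => [x|x y nxy].
    by case: (pi false); case: (pi true); rewrite rel_ID_diag.
  case: (pi false); case: (pi true) => /=;
    by rewrite ?rel_ID_diag ?(rel_ID_off _ _ nxy) ?(rel_ID_off _ _ (not_eq_sym nxy)).
Qed.

Lemma closed_rel_equiv_on_dd_free (t : term V) : vo t = 0 ->
  exists2 c : term V, dd_free c /\ vo c = 0 & rel_equiv_on P t c.
Proof.
move=> /closed_sem [e [d td]].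
have [c [dd_c vo_c cd]] : exists c : term V,
    [/\ dd_free c, vo c = 0 & forall M (I : V -> M -> M -> Prop), sem I c = rel_ID e d].
  case: (classic e) => he; case: (classic d) => hd;
    [exists ttop | exists tid | exists tdiff | exists tbot];
    by split=> // M I; apply: rel_IDP => [x|x y nxy] /=; split.
by exists c => [|M m0 I PM]; last rewrite td // cd.
Qed.

End ClosedTerms.

Section Decomposition.
Variables (V : Type) (P : Type -> Prop) (B2 B3 : Prop).
Hypothesis PB : size_profile P B2 B3.
Variables (a : V) (n : nat).
Implicit Types (s t u C : term V).

Definition decomposable t := exists C s,
  [/\ Sigma 1 C /\ vo C <= 1, (Sigma n s /\ vo s <= 1) \/ (Pi n s /\ vo s <= 1)
    & rel_equiv_on P t (subst s C)].

Lemma decomposable_arg t :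
  (Sigma n t /\ vo t <= 1) \/ (Pi n t /\ vo t <= 1) -> decomposable t.
Proof. by move=> At; exists (tvar a), t; split=> //; split=> //; exact: Sigma1_dd_free. Qed.

(* One of the two operands is variable-free; it is replaced by a constant, so
   that the hole of the other operand's context becomes the hole of the whole. *)
Lemma decomposable_op (op : term V -> term V -> term V) t1 t2 :
  (vo t1 <= 1 -> decomposable t1) -> (vo t2 <= 1 -> decomposable t2) ->
  (forall C1 C2, Sigma 1 C1 -> Sigma 1 C2 -> Sigma 1 (op C1 C2)) ->
  (forall M (I : V -> M -> M -> Prop) r1 r2 u1 u2, sem I r1 = sem I u1 ->
     sem I r2 = sem I u2 -> sem I (op r1 r2) = sem I (op u1 u2)) ->
  (forall C1 C2, vo (op C1 C2) = vo C1 + vo C2) ->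
  (forall s C1 C2, subst s (op C1 C2) = op (subst s C1) (subst s C2)) ->
  vo (op t1 t2) <= 1 -> decomposable (op t1 t2).
Proof.
move=> dec1 dec2 op_Sigma1 sem_op vo_op subst_op; rewrite vo_op => vo12.
have [vo_t1|vo_t2] : vo t1 = 0 \/ vo t2 = 0.
  case: (vo t1) vo12 => [|k]; first by left.
  by rewrite addSn ltnS leqn0 addn_eq0 => /andP[_ /eqP]; right.
- have [|C2 [s2 [[C2S vo_C2] s2A t2C]]] := dec2; first by rewrite vo_t1 in vo12.
  have [c [dd_c vo_c] t1c] := closed_rel_equiv_on_dd_free PB vo_t1.
  exists (op c C2), s2; split=> //.
    by split; [apply: op_Sigma1 => //; exact: Sigma1_dd_free | rewrite vo_op vo_c].
  move=> M m0 I PM; rewrite subst_op subst_closed //.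
  by apply: sem_op; [exact: t1c | exact: t2C].
- have [|C1 [s1 [[C1S vo_C1] s1A t1C]]] := dec1; first by rewrite vo_t2 addn0 in vo12.
  have [c [dd_c vo_c] t2c] := closed_rel_equiv_on_dd_free PB vo_t2.
  exists (op C1 c), s1; split=> //.
    by split; [apply: op_Sigma1 => //; exact: Sigma1_dd_free | rewrite vo_op vo_c addn0].
  move=> M m0 I PM; rewrite subst_op (subst_closed _ vo_c).
  by apply: sem_op; [exact: t1C | exact: t2c].
Qed.

Lemma Sigma_succ_decomposable t : Sigma n.+1 t -> vo t <= 1 -> decomposable t.
Proof.
move En: n.+1 => m St; elim: St En => {m t} //.
- by move=> m t St _ [Em] vo_t; apply: decomposable_arg; left; rewrite Em.
- by move=> m t Pit [Em] vo_t; apply: decomposable_arg; right; rewrite Em.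
- move=> m s u _ _ IHs _ IHu Em.
  by apply: (decomposable_op (op := @tcup V) (IHs Em) (IHu Em))
    => // [*|M I ? ? ? ? /= -> -> //]; apply: Sig_cup.
- move=> m s u _ _ IHs _ IHu Em.
  by apply: (decomposable_op (op := @tcap V) (IHs Em) (IHu Em))
    => // [*|M I ? ? ? ? /= -> -> //]; apply: Sig_cap.
- move=> m s u _ _ IHs _ IHu Em.
  by apply: (decomposable_op (op := @tdot V) (IHs Em) (IHu Em))
    => // [*|M I ? ? ? ? /= -> -> //]; apply: Sig_dot.
- move=> m pi s _ _ IHs Em /(IHs Em) [C [r [[CS vo_C] rA sC]]].
  exists (tperm pi C), r; split=> //; first by split=> //; exact: Sig_perm.
  by move=> M m0 I PM /=; rewrite (sC M m0 I PM).
- move=> m s u _ Pis Piu [Em]; rewrite -Em in Pis Piu.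
  have dec_Pi r : Pi n r -> vo r <= 1 -> decomposable r.
    by move=> Pir vo_r; apply: decomposable_arg; right.
  by apply: (decomposable_op (op := @tdot V) (dec_Pi s Pis) (dec_Pi u Piu))
    => // [*|M I ? ? ? ? /= -> -> //]; apply: Sig_dot.
Qed.

Lemma finite_quotient_on_Sigma_succ :
  finite_quotient_on P (fun t : term V => Sigma 1 t /\ vo t <= 1) ->
  finite_quotient_on P (fun t : term V => Sigma n t /\ vo t <= 1) ->
  finite_quotient_on P (fun t : term V => Pi n t /\ vo t <= 1) ->
  finite_quotient_on P (fun t : term V => Sigma n.+1 t /\ vo t <= 1).
Proof.
move=> fq_ctx fq_Sigma fq_Pi.
apply: finite_quotient_on_subst fq_ctx (finite_quotient_onU fq_Sigma fq_Pi) _.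
by move=> t [St vo_t]; exact: Sigma_succ_decomposable.
Qed.

End Decomposition.

Lemma finite_quotient_on_Sigma (V : Type) (P : Type -> Prop) (B2 B3 : Prop) (a : V) n :
  size_profile P B2 B3 ->
  finite_quotient_on P (fun t : term V => Sigma 1 t /\ vo t <= 1) ->
  finite_quotient_on P (fun t : term V => Sigma n t /\ vo t <= 1).
Proof.
move=> PB fq1; elim: n => [|n IHn].
  by apply: finite_quotient_on_mono fq1 => // t [St vo_t]; split=> //; exact: SigS_Sig.
by apply: (finite_quotient_on_Sigma_succ PB a fq1 IHn); exact: finite_quotient_on_Pi.
Qed.

Definition card_eq1 (M : Type) := forall x y : M, x = y.
Definition card_eq2 (M : Type) :=
  (exists x y : M, x <> y) /\ forall x y z : M, [\/ x = y, x = z | y = z].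
Definition card_ge3 (M : Type) := exists x y z : M, [/\ x <> y, x <> z & y <> z].

Lemma card_cases (M : Type) : card_eq1 M \/ card_eq2 M \/ card_ge3 M.
Proof.
have [|neq1] := classic (card_eq1 M); first by left.
have [x [y nxy]] : exists x y : M, x <> y.
  by apply: NNPP => no2; apply: neq1 => x y; apply: NNPP => nxy; apply: no2; exists x, y.
have [eq2|neq2] := classic (forall x y z : M, [\/ x = y, x = z | y = z]).
  by right; left; split=> //; exists x, y.
right; right; apply: NNPP => no3; apply: neq2 => u v w.
apply: NNPP => nuvw; apply: no3; exists u, v, w.
by split=> e; apply: nuvw; [constructor 1 | constructor 2 | constructor 3].
Qed.

Lemma exists_neq (M : Type) (x y : M) : x <> y -> forall u : M, exists z, z <> u.
Proof.
by move=> nxy u; case: (classic (x = u)) => [exu|nxu]; [exists y | exists x]; congruence.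
Qed.

Lemma size_profile_card_eq1 : size_profile card_eq1 False False.
Proof.
move=> M eq1; split=> [x|x y]; last by rewrite (eq1 x y).
by split=> // -[z]; rewrite (eq1 z x).
Qed.

Lemma size_profile_card_eq2 : size_profile card_eq2 True False.
Proof.
move=> M [[x [y nxy]] eq2]; split=> [u|u v nuv].
  by split=> // _; exact: exists_neq nxy u.
by split=> // -[z [nzu nzv]]; case: (eq2 u v z) => // e; [apply: nzu | apply: nzv].
Qed.

Lemma size_profile_card_ge3 : size_profile card_ge3 True True.
Proof.
move=> M [x [y [z [nxy nxz nyz]]]]; split=> [u|u v nuv].
  by split=> // _; exact: exists_neq nxy u.
split=> // _; case: (classic (x = u)) => [<-|nxu].
  by case: (classic (y = v)) => [<-|nyv]; [exists z | exists y]; split; congruence.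
case: (classic (x = v)) => [<-|nxv]; last by exists x.
by case: (classic (y = u)) => [<-|nyu]; [exists z | exists y]; split; congruence.
Qed.

Theorem lemma4p8 (V : finType) (HV : 0 < #|V|) (n : nat) :
  finite_quotient (fun t : term V => Sigma 1 t /\ vo t <= 1) ->
  finite_quotient (fun t : term V => Sigma n t /\ vo t <= 1).
Proof.
move=> /finite_quotientE fq1; apply/finite_quotientE.
case/card_gt0P: HV => a _.
have fq_on P B2 B3 : size_profile P B2 B3 ->
    finite_quotient_on P (fun t : term V => Sigma n t /\ vo t <= 1).
  by move=> PB; apply: (finite_quotient_on_Sigma a n PB); exact: finite_quotient_on_mono fq1.
apply: finite_quotient_on_mono (finite_quotient_on_classU (fq_on _ _ _ size_profile_card_eq1)
  (finite_quotient_on_classU (fq_on _ _ _ size_profile_card_eq2)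
                             (fq_on _ _ _ size_profile_card_ge3))) => // M _.
exact: card_cases.
Qed.
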